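(* Let $OG(e,2e)$ be (one component of) the variety of $e$-dimensional isotropic subspaces of $\mathbb C^{2e}$ equipped with a nondegenerate symmetric form, and let $U,V,W\in OG(e,2e)$ be pairwise in general position, i.e. pairwise intersecting trivially (which forces $e=2d$ to be even). Then there is a unique morphism $f\colon\mathbb P^1\to OG(e,2e)$ of degree $d$ with $f(0)=U$, $f(1)=V$, $f(\infty)=W$.
   Context: The degree of $f\colon\mathbb P^1\to OG(e,2e)$ is $\int f_*[\mathbb P^1]\cdot\tau_1$, where $\tau_1$ is the class of the Schubert divisor of $OG(e,2e)$ (the ample generator of its Picard group). Under the embedding $OG(e,2e)\subset G(e,2e)$ degrees double: a degree $d$ map to $OG$ has degree $2d$ as a map to $G(e,2e)$. *)

From HB Require Import structures.
From mathcomp Require Import all_boot all_order all_algebra.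
From mathcomp Require Import Rstruct complex.
Set Implicit Arguments. Unset Strict Implicit. Unset Printing Implicit Defensive.
Import Order.TTheory GRing.Theory Num.Theory.
Local Open Scope ring_scope.

Definition C : numClosedFieldType := (Rdefinitions.R)[i].

(* A subspace of C^n of dimension e is represented by an e x n matrix whose
   rows form a basis (row space, mxalgebra). *)

Definition nondeg_symmetric (n : nat) (Q : 'M[C]_n) : bool :=
  (Q^T == Q) && (Q \in unitmx).

Definition isotropic_of_dim (e n : nat) (Q : 'M[C]_n) (A : 'M[C]_(e, n)) : bool :=
  (\rank A == e) && (A *m Q *m A^T == 0).

Definition hform_eval (D : nat) (c : 'I_D.+1 -> C) (s t : C) : C :=
  \sum_(k < D.+1) c k * s ^+ k * t ^+ (D - k).

(* Plücker-type coordinates of B : 'M_(e,n): the e x e minors on the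
   column tuples sigma (all tuples; strictly increasing ones are the usual
   Plücker coordinates, the others are 0 or +- those). *)
Definition minor (e n : nat) (sigma : {ffun 'I_e -> 'I_n}) (B : 'M[C]_(e, n)) : C :=
  \det (colsub sigma B).

(* A point of P^1 is [s : t] with (s,t) <> (0,0).  A map f : P^1 -> OG(e,n)
   (n = 2e) is given by f s t : 'M_(e,n), whose row space is the image
   subspace.  It is a morphism whose composite with the Plücker embedding of
   the Grassmannian G(e,n) has degree D iff there are binary forms p_sigma of
   degree D without common zero on P^1 such that, at every point, the
   Plücker coordinates of f [s:t] are (p_sigma(s,t))_sigma (projectively). *)
Definition OG_morphism_of_Gdeg (e n : nat) (Q : 'M[C]_n) (D : nat)
  (f : C -> C -> 'M[C]_(e, n)) : Prop :=
  (forall s t, (s, t) != (0, 0) -> isotropic_of_dim Q (f s t)) /\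
  exists p : {ffun 'I_e -> 'I_n} -> 'I_D.+1 -> C,
    (forall s t, (s, t) != (0, 0) ->
        exists sigma, hform_eval (p sigma) s t != 0) /\
    (forall s t, (s, t) != (0, 0) ->
        exists B : 'M[C]_(e, n), (B == f s t)%MS /\
          forall sigma, minor sigma B = hform_eval (p sigma) s t).

(* Degree of f as a map to OG(e,2e): degree d as a map to OG means degree 2d
   as a map to G(e,2e). *)
Definition OG_morphism_of_deg (e n : nat) (Q : 'M[C]_n) (d : nat)
  (f : C -> C -> 'M[C]_(e, n)) : Prop :=
  OG_morphism_of_Gdeg Q (d.*2) f.

(* Since U, W are transversal, V is the graph of an isomorphism U -> W:
   there are bases X1 of U and X2 of W with V = X1 + X2 and [col_mx X1 X2]
   invertible.  Isotropy of X1, X2 and X1 + X2 makes S = X1 Q X2^T skew, and S is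
   invertible, so e is even.  The pencil [s : t] |-> t X1 + s X2 is isotropic and
   its Plücker coordinates are binary forms of degree e = 2d.  Conversely, pull a
   map g of degree d back along (col_mx X1 X2)^-1.  Its Plücker form of index
   sigma vanishes at [0 : 1] to order at least the number r of columns of sigma
   in the second block, and at [1 : 0] to order at least e - r; being of degree e
   it is a multiple of s^r t^(e - r), and the value at [1 : 1] pins down all the
   multiples up to one common scalar, so g is the pencil. *)

From HB Require Import structures.
From mathcomp Require Import all_boot all_order all_algebra.
From mathcomp Require Import fingroup perm.
From mathcomp Require Import Rstruct complex.
Import Order.TTheory GRing.Theory Num.Theory.
Local Open Scope ring_scope.
Set Implicit Arguments. Unset Strict Implicit. Unset Printing Implicit Defensive.

Definition ffun_upd (I : finType) (T : Type) (f : {ffun I -> T}) (i : I) (x : T) :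
  {ffun I -> T} := [ffun k => if k == i then x else f k].

Section Minors.
Variable R : comNzRingType.

Lemma cauchy_binet e n (A : 'M[R]_(e, n)) (N : 'M[R]_(n, e)) :
  \det (A *m N) =
  \sum_(phi : {ffun 'I_e -> 'I_n}) (\prod_i N (phi i) i) * \det (colsub phi A).
Proof.
rewrite /(\det _).
transitivity (\sum_(s : 'S_e) (-1) ^+ s * \sum_(phi : {ffun 'I_e -> 'I_n})
     (\prod_j N (phi j) j) * \prod_i A i (phi (s i))).
  apply: eq_bigr => s _; congr (_ * _).
  transitivity (\prod_i \sum_k (A i k * N k (s i))).
    by apply: eq_bigr => i _; rewrite mxE.
  rewrite bigA_distr_bigA /=.
  rewrite (reindex (fun phi : {ffun 'I_e -> 'I_n} => [ffun i => phi (s i)])); last first.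
    exists (fun f : {ffun 'I_e -> 'I_n} => [ffun j => f ((s^-1)%g j)]) => f _.
      by apply/ffunP => j; rewrite !ffunE permKV.
    by apply/ffunP => j; rewrite !ffunE permK.
  apply: eq_bigr => phi _; rewrite big_split /= mulrC; congr (_ * _).
    by symmetry; rewrite (reindex_perm s); apply: eq_bigr => i _; rewrite ffunE.
  by apply: eq_bigr => i _; rewrite ffunE.
under eq_bigr do rewrite big_distrr /=.
rewrite exchange_big /=; apply: eq_bigr => phi _.
rewrite /(\det _) big_distrr /=; apply: eq_bigr => s _.
rewrite mulrCA; congr (_ * (_ * _)).
by apply: eq_bigr => i _; rewrite mxE.
Qed.

Lemma minor_mulmx e n (B : 'M[R]_(e, n)) (M : 'M[R]_n) (sigma : {ffun 'I_e -> 'I_n}) :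
  \det (colsub sigma (B *m M)) =
  \sum_(phi : {ffun 'I_e -> 'I_n}) (\prod_i M (phi i) (sigma i)) * \det (colsub phi B).
Proof.
rewrite -mulmx_colsub cauchy_binet; apply: eq_bigr => phi _; congr (_ * _).
by apply: eq_bigr => i _; rewrite mxE.
Qed.

Lemma adj_colsub_mulmxE e n (Y : 'M[R]_(e, n)) (sigma : {ffun 'I_e -> 'I_n}) i l :
  (\adj (colsub sigma Y) *m Y) i l = \det (colsub (ffun_upd sigma i l) Y).
Proof.
rewrite (expand_det_col _ i) mxE; apply: eq_bigr => m _.
rewrite !mxE ffunE eqxx mulrC; congr (_ * _).
rewrite /cofactor; congr (_ * \det _); apply/matrixP => u v.
by rewrite !mxE ffunE eq_sym (negPf (neq_lift _ _)).
Qed.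

End Minors.

Section MinorsField.
Variable F : fieldType.

Lemma det_adj n (A : 'M[F]_n) : \det A != 0 -> \det (\adj A) = \det A ^+ n.-1.
Proof.
case: n A => [|n] A nz; first by rewrite !det_mx00.
have := congr1 determinant (mul_adj_mx A).
by rewrite det_mulmx det_scalar exprSr => /mulIf; apply.
Qed.

Lemma unitmx_adj n (A : 'M[F]_n) : \det A != 0 -> \adj A \in unitmx.
Proof.
move=> nz; have uA : A \in unitmx by rewrite unitmxE unitfE.
have -> : \adj A = \det A *: invmx A by rewrite /invmx uA scalerA mulfV ?scale1r.
by rewrite unitmxZ ?unitfE // unitmx_inv.
Qed.

Lemma eqmx_minors_propto e n (Y Z : 'M[F]_(e, n)) (k : F) (sigma0 : {ffun 'I_e -> 'I_n}) :
  k != 0 -> \det (colsub sigma0 Z) != 0 ->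
  (forall sigma : {ffun 'I_e -> 'I_n},
     \det (colsub sigma Y) = k * \det (colsub sigma Z)) ->
  (Y == Z)%MS.
Proof.
move=> k0 Z0 YZ.
have Y0 : \det (colsub sigma0 Y) != 0 by rewrite YZ mulf_neq0.
have adjYZ : \adj (colsub sigma0 Y) *m Y = k *: (\adj (colsub sigma0 Z) *m Z).
  by apply/matrixP => i l; rewrite [RHS]mxE !adj_colsub_mulmxE YZ.
have fullY : row_full (\adj (colsub sigma0 Y)) by rewrite row_full_unit unitmx_adj.
have fullZ : row_full (\adj (colsub sigma0 Z)) by rewrite row_full_unit unitmx_adj.
apply/eqmxP; apply: eqmx_trans (eqmx_sym (eqmxMfull Y fullY)) _.
by rewrite adjYZ; apply: eqmx_trans (eqmx_scale _ k0) (eqmxMfull Z fullZ).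
Qed.

Lemma minors_propto_eqmx e n (Y Z : 'M[F]_(e, n)) : row_free Z -> (Y == Z)%MS ->
  exists2 k, k != 0 & forall sigma : {ffun 'I_e -> 'I_n},
    \det (colsub sigma Y) = k * \det (colsub sigma Z).
Proof.
move=> freeZ /andP[/submxP[D ->] sZY].
have uD : D \in unitmx.
  rewrite -row_free_unit /row_free eqn_leq rank_leq_row.
  rewrite -[X in (X <= _)%N](eqP freeZ).
  exact: leq_trans (mxrankS sZY) (mxrankM_maxl D Z).
exists (\det D) => [|sigma]; first by rewrite -unitfE -unitmxE.
by rewrite -mulmx_colsub det_mulmx.
Qed.

End MinorsField.

Lemma eq_poly_off_roots (F : numDomainType) (p q a : {poly F}) : a != 0 ->
  (forall x, a.[x] != 0 -> p.[x] = q.[x]) -> p = q.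
Proof.
move=> a0 pq; suff : (p - q) * a == 0.
  by rewrite mulf_eq0 (negPf a0) orbF subr_eq0 => /eqP.
apply/eqP; set r := _ * a.
apply: (@roots_geq_poly_eq0 _ r [seq i%:R | i <- iota 0 (size r)]).
- apply/allP => _ /mapP[i _ ->]; apply/rootP; rewrite hornerM hornerD hornerN.
  have [->|ai] := eqVneq a.[i%:R] 0; first by rewrite mulr0.
  by rewrite pq // subrr mul0r.
- by rewrite map_inj_uniq ?iota_uniq // => i j /eqP; rewrite eqr_nat => /eqP.
- by rewrite size_map size_iota.
Qed.

Lemma dvdp_det_cols (F : fieldType) n (M : 'M[{poly F}]_n) (P : pred 'I_n) (d : {poly F}) :
  (forall i j, P j -> d %| M i j) -> d ^+ #|P| %| \det M.
Proof.
move=> dvdM.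
pose M' := \matrix_(i, j) (if P j then M i j %/ d else M i j).
have -> : M = M' *m diag_mx (\row_j (if P j then d else 1)).
  apply/matrixP => i j; rewrite mul_mx_diag !mxE.
  by case: ifP => Pj; rewrite ?mulr1 // divpK ?dvdM.
rewrite det_mulmx det_diag (eq_bigr (fun j => if P j then d else 1)) => [|j _].
  by rewrite -big_mkcond prodr_const dvdp_mulIr.
by rewrite mxE.
Qed.

(* The polynomial matrix [P i l := q (ffun_upd sigma0 i l)] is [adj(Y_sigma0) Y] at
   every point; its [B]-columns vanish at [0] and its [sigma]-minor is
   [(q sigma0)^(e-1) * q sigma]. *)
Lemma Xn_dvdp_minor_poly (F : numFieldType) e n (sigma0 : {ffun 'I_e -> 'I_n})
    (B : pred 'I_n) (q : {ffun 'I_e -> 'I_n} -> {poly F}) :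
  (forall x, exists Y : 'M[F]_(e, n),
     forall sigma : {ffun 'I_e -> 'I_n}, \det (colsub sigma Y) = (q sigma).[x]) ->
  (forall i l, B l -> (q (ffun_upd sigma0 i l)).[0] = 0) -> (q sigma0).[0] != 0 ->
  forall sigma : {ffun 'I_e -> 'I_n}, 'X ^+ #|[pred k | B (sigma k)]| %| q sigma.
Proof.
move=> minorsY q0 a0 sigma; set a := q sigma0 in a0 *.
pose P : 'M[{poly F}]_(e, n) := \matrix_(i, l) q (ffun_upd sigma0 i l).
have Pfactor : \det (colsub sigma P) = a ^+ e.-1 * q sigma.
  have anz : a != 0 by apply: contraNneq a0 => ->; rewrite horner0.
  apply: (eq_poly_off_roots anz) => x ax; have [Y minY] := minorsY x.
  have Px : map_mx (horner_eval x) P = \adj (colsub sigma0 Y) *m Y.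
    by apply/matrixP => i l; rewrite adj_colsub_mulmxE !mxE minY.
  have Y0 : \det (colsub sigma0 Y) = a.[x] := minY sigma0.
  rewrite -horner_evalE -det_map_mx map_mxsub Px -mulmx_colsub det_mulmx.
  by rewrite det_adj Y0 // minY hornerM horner_exp.
have : 'X ^+ #|[pred k | B (sigma k)]| %| \det (colsub sigma P).
  apply: dvdp_det_cols => i k Bk; rewrite mxE -['X]subr0 -polyC0 dvdp_XsubCl.
  by apply/rootP; rewrite mxE; apply: q0.
rewrite Pfactor Gauss_dvdpr //; apply: coprimep_expl; apply: coprimep_expr.
by rewrite coprimep_sym -['X]subr0 -polyC0 coprimep_XsubC rootE.
Qed.

Section BinaryForms.
Variable D : nat.
Implicit Types (c : 'I_D.+1 -> C) (s t x : C).

Lemma hform_eval_sum (I : finType) (w : I -> C) (c : I -> 'I_D.+1 -> C) s t :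
  hform_eval (fun k => \sum_i w i * c i k) s t = \sum_i w i * hform_eval (c i) s t.
Proof.
rewrite /hform_eval.
under eq_bigr do rewrite big_distrl /= big_distrl /=.
rewrite exchange_big /=; apply: eq_bigr => i _; rewrite big_distrr /=.
by apply: eq_bigr => k _; rewrite !mulrA.
Qed.

Lemma hform_eval_monomial h (a : C) s t : (h <= D)%N ->
  hform_eval (fun k : 'I_D.+1 => if val k == h then a else 0) s t =
  a * (s ^+ h * t ^+ (D - h)).
Proof.
move=> hD; rewrite /hform_eval (bigD1 (inord h)) //= inordK ?ltnS // eqxx big1 ?addr0.
  by rewrite !mulrA.
move=> k hk; case: eqVneq => [ek|]; rewrite ?mul0r //.
by move: hk; rewrite -ek inord_val eqxx.
Qed.

Definition hform_poly c : {poly C} := \poly_(k < D.+1) c (inord k).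
Definition hform_revpoly c : {poly C} := \poly_(k < D.+1) c (inord (D - k)).

Lemma hform_eval_x1 c x : hform_eval c x 1 = (hform_poly c).[x].
Proof.
rewrite horner_poly /hform_eval; apply: eq_bigr => k _.
by rewrite expr1n mulr1 inord_val.
Qed.

Lemma hform_eval_1x c x : hform_eval c 1 x = (hform_revpoly c).[x].
Proof.
rewrite horner_poly /hform_eval (reindex_inj rev_ord_inj) /=.
apply: eq_bigr => k _; rewrite expr1n mulr1.
have -> : rev_ord k = inord (D - k).
  by apply: val_inj; rewrite /= inordK ?subSS // ltnS leq_subr.
by rewrite subSS subKn // -ltnS.
Qed.

Lemma hform_eval_Xn_dvdp c h s t : (h <= D)%N ->
  'X^h %| hform_poly c -> 'X^(D - h) %| hform_revpoly c ->
  hform_eval c s t = c (inord h) * (s ^+ h * t ^+ (D - h)).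
Proof.
move=> hD dvd_s dvd_t; rewrite -hform_eval_monomial //; apply: eq_bigr => k _.
case: eqVneq => [<-|kh]; first by rewrite inord_val.
suff -> : c k = 0 by [].
have coefX0 (p : {poly C}) m j : 'X^m %| p -> (j < m)%N -> p`_j = 0.
  by case/dvdpP=> r ->; rewrite coefMXn => ->.
have kD : (k <= D)%N by rewrite -ltnS.
case: (ltngtP k h) kh => // [kh|hk] _.
  by have := coefX0 _ _ k dvd_s kh; rewrite coef_poly ltn_ord inord_val.
have : (D - k < D - h)%N by rewrite ltn_sub2lE.
by move/(coefX0 _ _ _ dvd_t); rewrite coef_poly ltnS leq_subr subKn // inord_val.
Qed.

End BinaryForms.

Section Pencil.
Variables (F : fieldType) (e : nat).
Implicit Types (s t : F) (sigma : {ffun 'I_e -> 'I_(e + e)}).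

Definition lcols : {ffun 'I_e -> 'I_(e + e)} := [ffun i => lshift e i].
Definition rcols : {ffun 'I_e -> 'I_(e + e)} := [ffun i => rshift e i].
Definition nright sigma : nat := #|[pred k | (e <= sigma k)%N]|.

Definition pencil s t : 'M[F]_(e, e + e) := row_mx t%:M s%:M.

Lemma nright_le sigma : (nright sigma <= e)%N.
Proof. by rewrite /nright -[X in (_ <= X)%N]card_ord max_card. Qed.

Lemma card_left_cols sigma : #|[pred k | (sigma k < e)%N]| = (e - nright sigma)%N.
Proof.
rewrite /nright -[X in (X - _)%N]card_ord -(cardC [pred k | (e <= sigma k)%N]).
by rewrite addKn; apply: eq_card => k; rewrite !inE ltnNge.
Qed.

Lemma minor_pencil sigma s t :
  \det (colsub sigma (pencil s t)) =
  \det (colsub sigma (pencil 1 1)) * (s ^+ nright sigma * t ^+ (e - nright sigma)).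
Proof.
pose d := \row_k (if (e <= sigma k)%N then s else t).
have -> : colsub sigma (pencil s t) = colsub sigma (pencil 1 1) *m diag_mx d.
  apply/matrixP => i k; rewrite mul_mx_diag !mxE.
  case: splitP => j sk; rewrite !mxE sk mulr_natl; first by rewrite leqNgt ltn_ord.
  by rewrite leq_addr.
rewrite det_mulmx det_diag -card_left_cols (bigID (fun k => (e <= sigma k)%N)) /=.
congr (_ * (_ * _)); rewrite -prodr_const.
  by apply: eq_big => [k|k hk]; rewrite ?inE // mxE hk.
by apply: eq_big => [k|k /negPf hk]; rewrite ?inE ?ltnNge // mxE hk.
Qed.

Lemma colsub_lcols_pencil s t : colsub lcols (pencil s t) = t%:M.
Proof. by apply/matrixP => i j; rewrite mxE ffunE row_mxEl. Qed.

Lemma colsub_rcols_pencil s t : colsub rcols (pencil s t) = s%:M.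
Proof. by apply/matrixP => i j; rewrite mxE ffunE row_mxEr. Qed.

Lemma row_free_pencil s t : (s, t) != (0, 0) -> row_free (pencil s t).
Proof.
move=> st; rewrite /row_free eqn_leq rank_leq_row -{1}(mxrank1 F e).
have [t0|t0] := eqVneq t 0.
  have s0 : s != 0 by apply: contraNneq st => ->; rewrite t0.
  have <- : pencil s t *m col_mx 0 s^-1%:M = 1%:M.
    by rewrite mul_row_col mulmx0 add0r -scalar_mxM mulfV.
  exact: mxrankM_maxl.
have <- : pencil s t *m col_mx t^-1%:M 0 = 1%:M.
  by rewrite mul_row_col mulmx0 addr0 -scalar_mxM mulfV.
exact: mxrankM_maxl.
Qed.

Lemma eqmx_pencil (Y : 'M[F]_(e, e + e)) (k : F) s t :
  k != 0 -> (s, t) != (0, 0) ->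
  (forall sigma, \det (colsub sigma Y) = k * \det (colsub sigma (pencil s t))) ->
  (Y == pencil s t)%MS.
Proof.
move=> k0 st minY; have [t0|t0] := eqVneq t 0.
  have s0 : s != 0 by apply: contraNneq st => ->; rewrite t0.
  apply: (eqmx_minors_propto (sigma0 := rcols) k0 _ minY).
  by rewrite colsub_rcols_pencil det_scalar expf_neq0.
apply: (eqmx_minors_propto (sigma0 := lcols) k0 _ minY).
by rewrite colsub_lcols_pencil det_scalar expf_neq0.
Qed.

Lemma pencil_mul_col_mx m (X1 X2 : 'M[F]_(e, m)) s t :
  pencil s t *m col_mx X1 X2 = t *: X1 + s *: X2.
Proof. by rewrite mul_row_col !mul_scalar_mx. Qed.

End Pencil.

Arguments lcols {e}.
Arguments rcols {e}.
Arguments pencil {F e}.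
Arguments row_free_pencil {F e s t}.

Section PluckerForms.
Variables (e n D : nat).
Implicit Types (sigma phi : {ffun 'I_e -> 'I_n}) (p : {ffun 'I_e -> 'I_n} -> 'I_D.+1 -> C).

Definition forms_mulmx (M : 'M[C]_n) p sigma (k : 'I_D.+1) : C :=
  \sum_(phi : {ffun 'I_e -> 'I_n}) (\prod_i M (phi i) (sigma i)) * p phi k.

Lemma minor_mulmx_hform (B : 'M[C]_(e, n)) (M : 'M[C]_n) p s t :
  (forall phi, \det (colsub phi B) = hform_eval (p phi) s t) ->
  forall sigma, \det (colsub sigma (B *m M)) = hform_eval (forms_mulmx M p sigma) s t.
Proof.
move=> minB sigma; rewrite minor_mulmx /forms_mulmx hform_eval_sum.
by apply: eq_bigr => phi _; rewrite minB.
Qed.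

End PluckerForms.

Definition pencil_forms e (phi : {ffun 'I_e -> 'I_(e + e)}) (k : 'I_e.+1) : C :=
  if val k == nright phi then \det (colsub phi (pencil 1 1)) else 0.

Lemma minor_pencil_hform e (phi : {ffun 'I_e -> 'I_(e + e)}) (s t : C) :
  \det (colsub phi (pencil s t)) = hform_eval (pencil_forms phi) s t.
Proof. by rewrite hform_eval_monomial ?nright_le // minor_pencil. Qed.

Lemma transversal_decomposition (F : fieldType) e (U V W : 'M[F]_(e, e + e)) :
  \rank U = e -> \rank V = e -> \rank W = e ->
  (U :&: V <= (0 : 'M_(e + e)))%MS -> (V :&: W <= (0 : 'M_(e + e)))%MS ->
  (U :&: W <= (0 : 'M_(e + e)))%MS ->
  exists X1 X2 : 'M[F]_(e, e + e),
    [/\ (X1 == U)%MS, (X2 == W)%MS, V = X1 + X2 & col_mx X1 X2 \in unitmx].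
Proof.
move=> rU rV rW tUV tVW tUW.
have rank_sum (A B : 'M[F]_(e, e + e)) :
    \rank A = e -> \rank B = e -> (A :&: B <= (0 : 'M_(e + e)))%MS ->
    \rank (A + B)%MS = (e + e)%N.
  by move=> rA rB tAB; have := (mxrank_adds_leqif A B).2; rewrite tAB rA rB => /eqP.
have eq_part (X A B : 'M[F]_(e, e + e)) : (X <= A)%MS -> \rank A = e -> \rank B = e ->
    (e + e <= \rank X + \rank B)%N -> (X == A)%MS.
  move=> sXA rA rB big; rewrite -(mxrank_leqif_eq sXA).2 eqn_leq mxrankS //= rA.
  by rewrite -(leq_add2r e) -[X in (_ <= _ + X)%N]rB.
have uUW : col_mx U W \in unitmx.
  by rewrite -row_free_unit /row_free -(addsmxE U W).1 rank_sum.
pose K := V *m invmx (col_mx U W).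
pose X1 := lsubmx K *m U; pose X2 := rsubmx K *m W.
have VE : V = X1 + X2 by rewrite -mul_row_col hsubmxK mulmxKV.
have eqX1 : (X1 == U)%MS.
  apply: (eq_part _ _ W) => //; first exact: submxMl.
  apply: leq_trans (mxrank_adds_leqif X1 W).1.
  rewrite -[X in (X <= _)%N](rank_sum V W) // mxrankS // addsmx_sub addsmxSr andbT VE.
  by apply: addmx_sub_adds => //; apply: submxMl.
have eqX2 : (X2 == W)%MS.
  apply: (eq_part _ _ U) => //; first exact: submxMl.
  rewrite addnC; apply: leq_trans (mxrank_adds_leqif U X2).1.
  rewrite -[X in (X <= _)%N](rank_sum U V) // mxrankS // addsmx_sub addsmxSl /= VE.
  by apply: addmx_sub_adds => //; apply: submxMl.
exists X1, X2; split => //.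
rewrite -row_free_unit /row_free -(addsmxE X1 X2).1.
by rewrite (adds_eqmx (eqmxP eqX1) (eqmxP eqX2)).1 rank_sum.
Qed.

Lemma isotropic_submx (F : fieldType) m1 m2 n (Q : 'M[F]_n)
    (A : 'M[F]_(m1, n)) (B : 'M[F]_(m2, n)) :
  (A <= B)%MS -> B *m Q *m B^T = 0 -> A *m Q *m A^T = 0.
Proof.
case/submxP=> D -> isoB.
by rewrite trmx_mul !mulmxA -(mulmxA D) -(mulmxA D) isoB !mulmx0 mul0mx.
Qed.

Lemma skew_unitmx_even (F : numFieldType) n (S : 'M[F]_n) :
  S^T = - S -> S \in unitmx -> ~~ odd n.
Proof.
move=> skewS; rewrite unitmxE unitfE => detS0; apply/negP => odd_n.
have := congr1 determinant skewS; rewrite det_tr -scaleN1r detZ -signr_odd odd_n.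
by rewrite expr1 mulN1r => /eqP; rewrite -addr_eq0 -mulr2n mulrn_eq0 /= (negPf detS0).
Qed.

(* With X1, X2 isotropic, S := X1 Q X2^T is the Gram matrix of the pairing between
   them; isotropy of X1 + X2 makes S skew, and nondegeneracy makes it invertible. *)
Lemma isotropic_split_even (F : numFieldType) e (Q : 'M[F]_(e + e))
    (X1 X2 : 'M[F]_(e, e + e)) :
  Q^T = Q -> Q \in unitmx -> col_mx X1 X2 \in unitmx ->
  X1 *m Q *m X1^T = 0 -> X2 *m Q *m X2^T = 0 -> (X1 + X2) *m Q *m (X1 + X2)^T = 0 ->
  ~~ odd e.
Proof.
move=> Qsym Qunit Lunit iso1 iso2 iso12.
set S := X1 *m Q *m X2^T.
have ST : X2 *m Q *m X1^T = S^T by rewrite /S !trmx_mul trmxK Qsym mulmxA.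
have skewS : S^T = - S.
  apply/eqP; rewrite -addr_eq0 addrC; apply/eqP.
  by move: iso12; rewrite linearD /= !mulmxDl !mulmxDr iso1 iso2 ST add0r addr0.
apply: (skew_unitmx_even skewS).
have gram : col_mx X1 X2 *m Q *m (col_mx X1 X2)^T =
            block_mx 0 1%:M 1%:M 0 *m block_mx S^T 0 0 S.
  rewrite tr_col_mx mul_col_mx mul_col_row iso1 iso2 ST mulmx_block.
  by rewrite !mul0mx !mul1mx !addr0 !add0r.
have : col_mx X1 X2 *m Q *m (col_mx X1 X2)^T \in unitmx.
  by rewrite !unitmx_mul Lunit Qunit unitmx_tr Lunit.
rewrite gram unitmx_mul => /andP[_]; rewrite unitmxE unitfE det_ublock.
by rewrite mulf_eq0 negb_or unitmxE unitfE => /andP[].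
Qed.

Lemma pencil_OG_morphism e (Q : 'M[C]_(e + e)) (X1 X2 : 'M[C]_(e, e + e)) :
  X1 *m Q *m X1^T = 0 -> X2 *m Q *m X2^T = 0 -> (X1 + X2) *m Q *m (X1 + X2)^T = 0 ->
  col_mx X1 X2 \in unitmx ->
  OG_morphism_of_Gdeg Q e (fun s t => pencil s t *m col_mx X1 X2).
Proof.
move=> iso1 iso2 iso12 Lunit; set L := col_mx X1 X2.
have cross : X1 *m Q *m X2^T + X2 *m Q *m X1^T = 0.
  by move: iso12; rewrite linearD /= !mulmxDl !mulmxDr iso1 iso2 add0r addr0.
have minorsL s t (sigma : {ffun 'I_e -> 'I_(e + e)}) :
    \det (colsub sigma (pencil s t *m L)) =
    hform_eval (forms_mulmx L (@pencil_forms e) sigma) s t.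
  by apply: minor_mulmx_hform => phi; apply: minor_pencil_hform.
split.
  move=> s t st; rewrite /isotropic_of_dim mxrankMfree ?row_free_unit //.
  rewrite (eqP (row_free_pencil st)) eqxx pencil_mul_col_mx linearD /= !linearZ /=.
  rewrite !mulmxDl !mulmxDr -!scalemxAl -!scalemxAr iso1 iso2 !scaler0 add0r addr0.
  by rewrite !scalerA [s * t]mulrC -scalerDr cross scaler0.
exists (forms_mulmx L (@pencil_forms e)); split; last first.
  by move=> s t _; exists (pencil s t *m L); split; [rewrite submx_refl | exact: minorsL].
move=> s t st.
suff : [exists sigma, hform_eval (forms_mulmx L (@pencil_forms e) sigma) s t != 0].
  by case/existsP=> sigma; exists sigma.
apply: contraNT st => /existsPn forms0.
have minors0 (tau : {ffun 'I_e -> 'I_(e + e)}) : \det (colsub tau (pencil s t)) = 0.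
  rewrite -[pencil s t](mulmxK Lunit) minor_mulmx big1 // => phi _.
  by rewrite minorsL (eqP (negPn (forms0 phi))) mulr0.
move: (minors0 lcols) (minors0 rcols).
rewrite colsub_lcols_pencil colsub_rcols_pencil !det_scalar.
by move=> /eqP; rewrite expf_eq0 => /andP[_ /eqP->] /eqP; rewrite expf_eq0 => /andP[_ /eqP->].
Qed.

Section PencilUniqueness.
Variables (e : nat) (X1 X2 : 'M[C]_(e, e + e)) (g : C -> C -> 'M[C]_(e, e + e)).
Variable p : {ffun 'I_e -> 'I_(e + e)} -> 'I_e.+1 -> C.
Let L := col_mx X1 X2.
Hypothesis Lunit : L \in unitmx.
Hypothesis g_rank : forall s t, (s, t) != (0, 0) -> \rank (g s t) = e.
Hypothesis g_forms : forall s t, (s, t) != (0, 0) ->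
  exists B, (B == g s t)%MS /\ forall sigma, minor sigma B = hform_eval (p sigma) s t.
Hypotheses (g0 : (g 0 1 == X1)%MS) (g1 : (g 1 1 == (X1 + X2)%R)%MS) (ginf : (g 1 0 == X2)%MS).
Implicit Types (s t : C) (sigma : {ffun 'I_e -> 'I_(e + e)}).

(* The Plücker forms of [s, t |-> g s t *m L^-1]. *)
Let q := forms_mulmx (invmx L) p.

Lemma pullback_minors s t : (s, t) != (0, 0) ->
  exists Y, [/\ (Y *m L == g s t)%MS, row_free Y &
                forall sigma, \det (colsub sigma Y) = hform_eval (q sigma) s t].
Proof.
move=> st; have [B [eqB minB]] := g_forms st.
exists (B *m invmx L); split; first by rewrite mulmxKV.
  by rewrite /row_free mxrankMfree ?row_free_unit ?unitmx_inv // (eqmx_rank eqB) g_rank.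
exact: minor_mulmx_hform.
Qed.

Lemma pullback_minors_propto s t : (s, t) != (0, 0) -> (g s t == pencil s t *m L)%MS ->
  exists2 k, k != 0 &
    forall sigma, hform_eval (q sigma) s t = k * \det (colsub sigma (pencil s t)).
Proof.
move=> st eq_g; have [Y [eqY freeY minY]] := pullback_minors st.
have /eqmxP YL : (Y *m L == pencil s t *m L)%MS.
  by apply/eqmxP; apply: eqmx_trans (eqmxP eqY) (eqmxP eq_g).
have := eqmxMr (invmx L) YL; rewrite !mulmxK // => /eqmxP eqYp.
have [k k0 minYk] := minors_propto_eqmx (row_free_pencil st) eqYp.
by exists k => // sigma; rewrite -minY.
Qed.

Let g_at_0 : (g 0 1 == pencil 0 1 *m L)%MS.
Proof. by rewrite pencil_mul_col_mx scale1r scale0r addr0. Qed.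

Let g_at_1 : (g 1 1 == pencil 1 1 *m L)%MS.
Proof. by rewrite pencil_mul_col_mx !scale1r. Qed.

Let g_at_oo : (g 1 0 == pencil 1 0 *m L)%MS.
Proof. by rewrite pencil_mul_col_mx scale1r scale0r add0r. Qed.

(* The forms vanish to order [nright sigma] at [0] and [e - nright sigma] at [oo],
   because the pulled-back map passes through [pencil 0 1] and [pencil 1 0]. *)
Lemma pullback_forms_monomial sigma s t :
  hform_eval (q sigma) s t =
  q sigma (inord (nright sigma)) * (s ^+ nright sigma * t ^+ (e - nright sigma)).
Proof.
have nz_x1 (x : C) : ((x, 1) : C * C) != (0, 0) by rewrite xpair_eqE oner_eq0 andbF.
have nz_1x (x : C) : ((1, x) : C * C) != (0, 0) by rewrite xpair_eqE oner_eq0.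
have [k0 k0n h0] := pullback_minors_propto (nz_x1 0) g_at_0.
have [ki kin hi] := pullback_minors_propto (nz_1x 0) g_at_oo.
apply: hform_eval_Xn_dvdp; first exact: nright_le.
  apply: (Xn_dvdp_minor_poly (sigma0 := lcols) (B := fun l => (e <= l)%N)
            (q := fun tau => hform_poly (q tau))).
  - move=> x; have [Y [_ _ minY]] := pullback_minors (nz_x1 x).
    by exists Y => tau; rewrite minY hform_eval_x1.
  - move=> i l le_l; rewrite -hform_eval_x1 h0 minor_pencil expr0n.
    suff /gtn_eqF-> : (0 < nright (ffun_upd lcols i l))%N by rewrite mul0r !mulr0.
    by apply/card_gt0P; exists i; rewrite inE ffunE eqxx.
  - by rewrite -hform_eval_x1 h0 colsub_lcols_pencil det1 mulr1.
rewrite -card_left_cols.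
apply: (Xn_dvdp_minor_poly (sigma0 := rcols) (B := fun l => (l < e)%N)
          (q := fun tau => hform_revpoly (q tau))).
- move=> x; have [Y [_ _ minY]] := pullback_minors (nz_1x x).
  by exists Y => tau; rewrite minY hform_eval_1x.
- move=> i l lt_l; rewrite -hform_eval_1x hi minor_pencil expr0n -card_left_cols.
  suff /gtn_eqF-> : (0 < #|[pred k | (ffun_upd rcols i l k < e)%N]|)%N by rewrite !mulr0.
  by apply/card_gt0P; exists i; rewrite inE ffunE eqxx.
- by rewrite -hform_eval_1x hi colsub_rcols_pencil det1 mulr1.
Qed.

Lemma pencil_morphism_unique s t : (s, t) != (0, 0) -> (g s t == pencil s t *m L)%MS.
Proof.
move=> st; have nz11 : ((1 : C), (1 : C)) != (0, 0) by rewrite xpair_eqE oner_eq0.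
have [k1 k1n h1] := pullback_minors_propto nz11 g_at_1.
have [Y [eqY _ minY]] := pullback_minors st.
have /eqmxP eqYp : (Y == pencil s t)%MS.
  apply: (eqmx_pencil k1n st) => sigma; have := h1 sigma.
  rewrite pullback_forms_monomial !expr1n !mulr1 => h1s.
  by rewrite minY pullback_forms_monomial h1s [in RHS]minor_pencil -mulrA.
by apply/eqmxP; apply: eqmx_trans (eqmx_sym (eqmxP eqY)) (eqmxMr L eqYp).
Qed.

End PencilUniqueness.

Unset Implicit Arguments. Set Strict Implicit.

Theorem mainTheorem10 (e : nat) (Q : 'M[C]_(e + e))
  (U V W : 'M[C]_(e, e + e)) :
  nondeg_symmetric Q ->
  isotropic_of_dim Q U -> isotropic_of_dim Q V -> isotropic_of_dim Q W ->
  (U :&: V <= (0 : 'M[C]_(e + e)))%MS -> (V :&: W <= (0 : 'M[C]_(e + e)))%MS -> (U :&: W <= (0 : 'M[C]_(e + e)))%MS ->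
  exists d : nat, e = d.*2 /\
    exists f : C -> C -> 'M[C]_(e, e + e),
      [/\ OG_morphism_of_deg Q d f,
          (f 0 1 == U)%MS, (f 1 1 == V)%MS, (f 1 0 == W)%MS &
          forall g : C -> C -> 'M[C]_(e, e + e),
            OG_morphism_of_deg Q d g ->
            (g 0 1 == U)%MS -> (g 1 1 == V)%MS -> (g 1 0 == W)%MS ->
            forall s t : C, (s, t) != (0, 0) -> (g s t == f s t)%MS].
Proof.
move=> /andP[/eqP Qsym Qunit] /andP[/eqP rU /eqP isoU] /andP[/eqP rV /eqP isoV].
move=> /andP[/eqP rW /eqP isoW] tUV tVW tUW.
have [X1 [X2 [eqX1 eqX2 VE Lunit]]] := transversal_decomposition rU rV rW tUV tVW tUW.
have iso1 : X1 *m Q *m X1^T = 0 by case/andP: eqX1 => /isotropic_submx-> .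
have iso2 : X2 *m Q *m X2^T = 0 by case/andP: eqX2 => /isotropic_submx-> .
have iso12 : (X1 + X2) *m Q *m (X1 + X2)^T = 0 by rewrite -VE.
have e_even := isotropic_split_even Qsym Qunit Lunit iso1 iso2 iso12.
exists e./2; rewrite /OG_morphism_of_deg even_halfK //; split => //.
exists (fun s t => pencil s t *m col_mx X1 X2); split.
- exact: pencil_OG_morphism.
- by rewrite pencil_mul_col_mx scale1r scale0r addr0.
- by rewrite pencil_mul_col_mx !scale1r -VE submx_refl.
- by rewrite pencil_mul_col_mx scale1r scale0r add0r.
have eqmx_trans_sym m1 m2 (A : 'M[C]_(m1, e + e)) (B : 'M[C]_(m2, e + e))
    (X : 'M[C]_(e, e + e)) : (A == B)%MS -> (X == B)%MS -> (A == X)%MS.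
  by move=> /eqmxP AB /eqmxP XB; apply/eqmxP; apply: eqmx_trans AB (eqmx_sym XB).
move=> g [g_iso [p [_ g_forms]]] g0 g1 ginf.
apply: (pencil_morphism_unique Lunit _ g_forms).
- by move=> s t /g_iso /andP[/eqP].
- exact: eqmx_trans_sym g0 eqX1.
- by rewrite -VE.
- exact: eqmx_trans_sym ginf eqX2.
Qed.
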